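(* For an ensemble $\mathcal{E}=\{\eta_{i},\rho_{i}\}_{i\in\mathbb{N}_{n}}$ and $x\in\mathbb{N}_{n}$, $$\mathbb{M}_{x}(\mathcal{E})=\{E\in\mathbb{H}_{+}\mid E\,\Pi_{x}(\mathcal{E})=\mathbb{O}\},\qquad \mathbb{M}_{x}^{*}(\mathcal{E})=\{E\in\mathbb{H}\mid \Pi_{x}^{\bot}(\mathcal{E})E\Pi_{x}^{\bot}(\mathcal{E})\in\mathbb{H}_{+}\},$$ where $\Pi_{x}(\mathcal{E})$ and $\Pi_{x}^{\bot}(\mathcal{E})$ are the orthogonal projections onto the support and the kernel of $\mathcal{C}_{x}(\mathcal{E})\rho_{0}-\eta_{x}\rho_{x}$, respectively, and $\mathbb{O}$ is the zero operator.
   Context: $\mathbb{N}_{n}=\{1,\ldots,n\}$. $\mathcal{H}$ is a finite-dimensional complex Hilbert space, $\mathbb{H}$ the Hermitian operators on it, $\mathbb{H}_{+}$ the positive-semidefinite ones. An ensemble $\{\eta_{i},\rho_{i}\}_{i\in\mathbb{N}_{n}}$: density operators $\rho_i$ with probabilities $\eta_i>0$ summing to $1$; $\rho_0=\sum_i\eta_i\rho_i$. A measurement is $\{M_{?}\}\cup\{M_{i}\}_{i\in\mathbb{N}_{n}}\subseteq\mathbb{H}_+$ summing to the identity. $\mathcal{C}_{x}(\mathcal{E})$ is the maximum of $\eta_{x}\Tr(\rho_{x}M_{x})/\Tr(\rho_{0}M_{x})$ over measurements with $\Tr(\rho_{0}M_{x})>0$. $\mathbb{M}_{x}(\mathcal{E})=\{E\in\mathbb{H}_{+}\mid\Tr[(\mathcal{C}_{x}(\mathcal{E})\rho_{0}-\eta_{x}\rho_{x})E]=0\}$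 and $\mathbb{M}_{x}^{*}(\mathcal{E})=\{E\in\mathbb{H}\mid\Tr(EF)\ge0\ \forall F\in\mathbb{M}_{x}(\mathcal{E})\}$. *)

(* Operators on a d-dimensional complex Hilbert space are
   represented as d x d matrices over an algebraically closed numeric field C
   (e.g. algC), with the standard inner product. *)
From HB Require Import structures.
From mathcomp Require Import all_boot all_order all_algebra.
Set Implicit Arguments. Unset Strict Implicit. Unset Printing Implicit Defensive.
Import Order.TTheory GRing.Theory Num.Theory.
Local Open Scope ring_scope.

Section QDefs.
Variable C : numClosedFieldType.
Variable d : nat.

Definition adj (A : 'M[C]_d) : 'M[C]_d := (map_mx Num.conj A)^T.

Definition is_herm (A : 'M[C]_d) : Prop := adj A = A.

Definition is_psd (A : 'M[C]_d) : Prop :=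
  is_herm A /\ forall v : 'rV[C]_d, 0 <= (v *m A *m (map_mx Num.conj v)^T) 0 0.

Definition density (rho : 'M[C]_d) : Prop := is_psd rho /\ \tr rho = 1.

(* ensemble {eta_i, rho_i}_{i in N_n} (indices 'I_n stand for N_n) *)
Definition ensemble n (eta : 'I_n -> C) (rho : 'I_n -> 'M[C]_d) : Prop :=
  (forall i, 0 < eta i) /\ \sum_(i < n) eta i = 1 /\ (forall i, density (rho i)).

Definition rho0 n (eta : 'I_n -> C) (rho : 'I_n -> 'M[C]_d) : 'M[C]_d :=
  \sum_(i < n) eta i *: rho i.

Definition measurement n (Mq : 'M[C]_d) (M : 'I_n -> 'M[C]_d) : Prop :=
  is_psd Mq /\ (forall i, is_psd (M i)) /\ Mq + \sum_(i < n) M i = 1%:M.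

Definition ratio_x n (eta : 'I_n -> C) (rho : 'I_n -> 'M[C]_d) (x : 'I_n)
  (M : 'I_n -> 'M[C]_d) : C :=
  eta x * \tr (rho x *m M x) / \tr (rho0 eta rho *m M x).

(* c is C_x(E): the maximum of eta_x Tr(rho_x M_x)/Tr(rho_0 M_x) over
   measurements with Tr(rho_0 M_x) > 0 (attained, and an upper bound). *)
Definition is_Cx n (eta : 'I_n -> C) (rho : 'I_n -> 'M[C]_d) (x : 'I_n) (c : C)
  : Prop :=
  (exists Mq M, measurement Mq M /\ 0 < \tr (rho0 eta rho *m M x)
                /\ ratio_x eta rho x M = c) /\
  (forall Mq M, measurement Mq M -> 0 < \tr (rho0 eta rho *m M x) ->
                ratio_x eta rho x M <= c).

Definition Dx n (eta : 'I_n -> C) (rho : 'I_n -> 'M[C]_d) (x : 'I_n) (c : C)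
  : 'M[C]_d := c *: rho0 eta rho - eta x *: rho x.

Definition Mset n (eta : 'I_n -> C) (rho : 'I_n -> 'M[C]_d) (x : 'I_n) (c : C)
  (E : 'M[C]_d) : Prop :=
  is_psd E /\ \tr (Dx eta rho x c *m E) = 0.

Definition Mstar n (eta : 'I_n -> C) (rho : 'I_n -> 'M[C]_d) (x : 'I_n) (c : C)
  (E : 'M[C]_d) : Prop :=
  is_herm E /\ forall F, Mset eta rho x c F -> 0 <= \tr (E *m F).

Definition orth_proj (P : 'M[C]_d) : Prop := is_herm P /\ P *m P = P.

(* P is the orthogonal projection onto the support (range) of A.
   Matrices act on row vectors here, so the range of A is its row space;
   for Hermitian A this coincides with the column space. *)
Definition supp_proj (A P : 'M[C]_d) : Prop :=
  orth_proj P /\ (P :=: A)%MS.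

Definition ker_proj (A P : 'M[C]_d) : Prop :=
  orth_proj P /\ (P :=: kermx A)%MS.

End QDefs.

From HB Require Import structures.
From mathcomp Require Import all_boot all_order all_algebra.
From mathcomp Require Import ring.
Import Order.TTheory GRing.Theory Num.Theory.
Set Implicit Arguments. Unset Strict Implicit. Unset Printing Implicit Defensive.
Local Open Scope ring_scope.
Local Open Scope sesquilinear_scope.

(* Write D := C_x rho_0 - eta_x rho_x.  Testing the optimality of C_x against the
   two-outcome measurement {1 - P_v, P_v}, with P_v the projection onto a vector v,
   gives eta_x <v|rho_x|v> <= C_x <v|rho_0|v>, so D is positive semidefinite.
   For psd D and F the trace Tr(D F) is a sum of nonnegative quadratic forms, so it
   vanishes only if F D = 0, i.e. F Pi = 0.  Since Pi + Pi^perp = 1, these F are exactly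
   the psd F with F = Pi^perp F Pi^perp, so pairing a hermitian E against them only sees
   the compression Pi^perp E Pi^perp; testing on rank-one F shows that all pairings are
   nonnegative iff that compression is psd. *)

Section ConjugateTranspose.
Context {C : numClosedFieldType}.

Lemma trmxC_mul m n p (A : 'M[C]_(m, n)) (B : 'M[C]_(n, p)) :
  (A *m B)^t* = B^t* *m A^t*.
Proof. by rewrite trmx_mul map_mxM. Qed.

Lemma trmxCB m n (A B : 'M[C]_(m, n)) : (A - B)^t* = A^t* - B^t*.
Proof. by rewrite linearB map_mxB. Qed.

Lemma trmxCZ m n a (A : 'M[C]_(m, n)) : (a *: A)^t* = a^* *: A^t*.
Proof. by rewrite linearZ map_mxZ. Qed.

Lemma trmxC1 n : (1%:M : 'M[C]_n)^t* = 1%:M.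
Proof. by rewrite trmx1 map_mx1. Qed.

Lemma trmxC0 m n : (0 : 'M[C]_(m, n))^t* = 0.
Proof. by rewrite trmx0 map_mx0. Qed.

Lemma trmxC_sum m n I (r : seq I) (P : pred I) (F : I -> 'M[C]_(m, n)) :
  (\sum_(i <- r | P i) F i)^t* = \sum_(i <- r | P i) (F i)^t*.
Proof. by rewrite raddf_sum map_mx_sum. Qed.

End ConjugateTranspose.

Section PositiveSemidefinite.
Context {C : numClosedFieldType}.

Definition qform n (v : 'rV[C]_n) (A : 'M[C]_n) : C := (v *m A *m v^t*) 0 0.

Lemma is_hermE n (A : 'M[C]_n) : is_herm A <-> A^t* = A.
Proof. by rewrite /is_herm /adj map_trmx. Qed.

Lemma is_psdE n (A : 'M[C]_n) :
  is_psd A <-> A^t* = A /\ forall v, 0 <= qform v A.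
Proof.
rewrite /is_psd is_hermE /qform.
by split=> -[-> h]; split=> // v; move: (h v); rewrite map_trmx.
Qed.

Lemma psd_herm n (A : 'M[C]_n) : is_psd A -> A^t* = A.
Proof. by case/is_psdE. Qed.

Lemma psd_qform_ge0 n (A : 'M[C]_n) v : is_psd A -> 0 <= qform v A.
Proof. by case/is_psdE=> _; apply. Qed.

Lemma qformB n (v : 'rV[C]_n) A B : qform v (A - B) = qform v A - qform v B.
Proof. by rewrite /qform mulmxBr mulmxBl !mxE. Qed.

Lemma qformZ n (v : 'rV[C]_n) a A : qform v (a *: A) = a * qform v A.
Proof. by rewrite /qform -scalemxAr -scalemxAl mxE. Qed.

Lemma qform_sum n (v : 'rV[C]_n) I (r : seq I) (P : pred I) (F : I -> 'M[C]_n) :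
  qform v (\sum_(i <- r | P i) F i) = \sum_(i <- r | P i) qform v (F i).
Proof. by rewrite /qform mulmx_sumr mulmx_suml summxE. Qed.

Lemma qform_mulmx n (v : 'rV[C]_n) (P A : 'M[C]_n) :
  qform (v *m P) A = qform v (P *m A *m P^t*).
Proof. by rewrite /qform trmxC_mul !mulmxA. Qed.

Lemma qform_row m n (Y : 'M[C]_(m, n)) X i :
  qform (row i Y) X = (Y *m X *m Y^t*) i i.
Proof.
by rewrite /qform -row_mul !mxE; apply: eq_bigr => j _; rewrite !mxE.
Qed.

Lemma qform_gram m n (v : 'rV[C]_n) (L : 'M[C]_(m, n)) :
  qform v (L^t* *m L) = dotmx (v *m L^t*) (v *m L^t*).
Proof. by rewrite dotmxE /qform trmxC_mul trmxCK !mulmxA. Qed.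

Lemma qform_rank1 n (u v : 'rV[C]_n) :
  qform u (v^t* *m v) = `|dotmx u v| ^+ 2.
Proof.
by rewrite qform_gram !dotmxE mxE big_ord1 normCK [in X in _ * X]mxE !mxE.
Qed.

Lemma psd_gram m n (L : 'M[C]_(m, n)) : is_psd (L^t* *m L).
Proof.
apply/is_psdE; split; first by rewrite trmxC_mul trmxCK.
by move=> v; rewrite qform_gram dnorm_ge0.
Qed.

Lemma psd0 n : is_psd (0 : 'M[C]_n).
Proof. by have := psd_gram (0 : 'M[C]_n); rewrite mulmx0. Qed.

Lemma psdZ n a (A : 'M[C]_n) : 0 <= a -> is_psd A -> is_psd (a *: A).
Proof.
move=> a_ge0 psdA; apply/is_psdE; split.
  by rewrite trmxCZ geC0_conj // psd_herm.
by move=> v; rewrite qformZ mulr_ge0 // psd_qform_ge0.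
Qed.

(* Spectral theorem: A = P^t* diag(s) P with s >= 0, so L = diag(sqrt s) P. *)
Lemma psd_gramP n (A : 'M[C]_n) : is_psd A -> exists L : 'M[C]_n, A = L^t* *m L.
Proof.
move=> psdA; have normalA : A \is normalmx.
  by apply/normalmxP; rewrite (psd_herm psdA).
have /orthomx_spectralP eA := normalA.
set P := spectralmx A in eA; set s := spectral_diag A in eA.
rewrite invmx_unitary ?spectral_unitarymx // in eA.
have PPt : P *m P^t* = 1%:M by apply/unitarymxP; apply: spectral_unitarymx.
have s_ge0 j : 0 <= s 0 j.
  have := psd_qform_ge0 (row j P) psdA.
  by rewrite qform_row {1}eA !mulmxA PPt mul1mx -mulmxA PPt mulmx1 mxE eqxx.
pose S := diag_mx (\row_j sqrtC (s 0 j)).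
have St : S^t* = S.
  apply/matrixP => i j; rewrite !mxE raddfMn /= geC0_conj ?sqrtC_ge0 //.
  by have [->|ne] := eqVneq j i; rewrite ?eqxx // !mulr0n.
exists (S *m P); rewrite trmxC_mul St {1}eA !mulmxA -[P^t* *m S *m S]mulmxA.
rewrite mulmx_diag; congr (_ *m diag_mx _ *m _); apply/rowP => j.
by rewrite !mxE -expr2 sqrtCK.
Qed.

Lemma psd_qform_eq0 n (A : 'M[C]_n) v : is_psd A -> qform v A = 0 -> v *m A = 0.
Proof.
case/psd_gramP=> L ->; rewrite qform_gram => /eqP; rewrite dnorm_eq0 => /eqP.
by rewrite mulmxA => ->; rewrite mul0mx.
Qed.

Lemma mxtrace_mul_gram m n (A : 'M[C]_n) (L : 'M[C]_(m, n)) :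
  \tr (A *m (L^t* *m L)) = \sum_i qform (row i L) A.
Proof.
rewrite mulmxA mxtrace_mulC mulmxA; apply: eq_bigr => i _.
by rewrite qform_row.
Qed.

Lemma mxtrace_mul_rank1 n (A : 'M[C]_n) v : \tr (A *m (v^t* *m v)) = qform v A.
Proof. by rewrite mulmxA mxtrace_mulC mulmxA trace_mx11. Qed.

Lemma mxtrace_psdM_ge0 n (A B : 'M[C]_n) :
  is_psd A -> is_psd B -> 0 <= \tr (A *m B).
Proof.
move=> psdA /psd_gramP [L ->]; rewrite mxtrace_mul_gram.
by apply: sumr_ge0 => i _; apply: psd_qform_ge0.
Qed.

Lemma mxtrace_psdM_eq0 n (A B : 'M[C]_n) :
  is_psd A -> is_psd B -> \tr (A *m B) = 0 -> B *m A = 0.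
Proof.
move=> psdA /psd_gramP [L ->]; rewrite mxtrace_mul_gram => /psumr_eq0P qL0.
have {}qL0 i : qform (row i L) A = 0 by apply: qL0 => // j _; apply: psd_qform_ge0.
suff LA : L *m A = 0 by rewrite -mulmxA LA mulmx0.
by apply/row_matrixP => i; rewrite row_mul row0 psd_qform_eq0.
Qed.

Lemma psd_mulmxC n (A B : 'M[C]_n) :
  is_psd A -> is_psd B -> B *m A = 0 -> A *m B = 0.
Proof.
move=> psdA psdB BA0.
by rewrite -(psd_herm psdA) -(psd_herm psdB) -trmxC_mul BA0 trmxC0.
Qed.

(* Nonnegativity is the Cauchy-Schwarz inequality. *)
Lemma psd_1_sub_rank1 n (v : 'rV[C]_n) : v != 0 ->
  is_psd (1%:M - (dotmx v v)^-1 *: (v^t* *m v)).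
Proof.
rewrite -(dnorm_gt0 (@dotmx C n)) => nv_gt0; apply/is_psdE; split.
  by rewrite trmxCB trmxC1 trmxCZ trmxC_mul trmxCK geC0_conj // invr_ge0 ltW.
move=> u; rewrite qformB qformZ qform_rank1 /qform mulmx1 -dotmxE.
have [cs _] := CauchySchwarz (@dotmx C n) u v.
by rewrite subr_ge0 mulrC ler_pdivrMr // mulrC.
Qed.

End PositiveSemidefinite.

Section SupportKernelProjections.
Context {C : numClosedFieldType} {n : nat} (D Pi Pp : 'M[C]_n).
Hypotheses (D_herm : D^t* = D) (Pi_supp : supp_proj D Pi) (Pp_ker : ker_proj D Pp).

Lemma supp_proj_herm : Pi^t* = Pi.
Proof. by case: Pi_supp => -[/is_hermE]. Qed.

Lemma ker_proj_herm : Pp^t* = Pp.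
Proof. by case: Pp_ker => -[/is_hermE]. Qed.

Lemma supp_proj_idem : Pi *m Pi = Pi.
Proof. by case: Pi_supp => -[]. Qed.

Lemma ker_proj_idem : Pp *m Pp = Pp.
Proof. by case: Pp_ker => -[]. Qed.

Lemma mulmx_supp_proj_eq0 m (E : 'M[C]_(m, n)) : E *m Pi = 0 <-> E *m D = 0.
Proof.
have [_ PiD] := Pi_supp.
have [X eX] : exists X, Pi = X *m D by apply/submxP; rewrite PiD.
have [Y eY] : exists Y, D = Y *m Pi by apply/submxP; rewrite PiD.
have {}eX : Pi = D *m X^t* by rewrite -supp_proj_herm eX trmxC_mul D_herm.
have {}eY : D = Pi *m Y^t* by rewrite -D_herm eY trmxC_mul supp_proj_herm.
by split=> E0; [rewrite eY | rewrite eX]; rewrite mulmxA E0 mul0mx.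
Qed.

Lemma ker_proj_mulmx_eq0 : Pp *m D = 0.
Proof. by apply/sub_kermxP; case: Pp_ker => _ ->. Qed.

Lemma ker_supp_proj_eq0 : Pp *m Pi = 0.
Proof. exact/mulmx_supp_proj_eq0/ker_proj_mulmx_eq0. Qed.

Lemma supp_ker_proj_eq0 : Pi *m Pp = 0.
Proof.
by rewrite -supp_proj_herm -ker_proj_herm -trmxC_mul ker_supp_proj_eq0 trmxC0.
Qed.

(* Q := 1 - Pi - Pp kills D, so Q = R Pp; as Q Pp = 0 and Q is a hermitian
   idempotent, Q = Q Q^t* = 0. *)
Lemma supp_proj_add_ker_proj : Pi + Pp = 1%:M.
Proof.
pose Q := 1%:M - Pi - Pp.
have QPi : Q *m Pi = 0.
  by rewrite !mulmxBl mul1mx ker_supp_proj_eq0 supp_proj_idem subr0 subrr.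
have QPp : Q *m Pp = 0.
  by rewrite !mulmxBl mul1mx supp_ker_proj_eq0 ker_proj_idem subr0 subrr.
have [R eR] : exists R, Q = R *m Pp.
  apply/submxP; case: Pp_ker => _ ->; apply/sub_kermxP.
  by apply/mulmx_supp_proj_eq0.
have QH : Q^t* = Q by rewrite !trmxCB trmxC1 supp_proj_herm ker_proj_herm.
have QQ : Q *m Q = Q by rewrite {2}/Q !mulmxBr mulmx1 QPi QPp !subr0.
have Q0 : Q = 0.
  rewrite -QQ -[X in _ *m X]QH [X in X^t*]eR trmxC_mul ker_proj_herm.
  by rewrite mulmxA QPp mul0mx.
by apply/eqP; rewrite eq_sym -subr_eq0 opprD addrA; apply/eqP.
Qed.

Lemma psd_mxtrace_eq0_supp_proj E : is_psd D -> is_psd E ->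
  \tr (D *m E) = 0 <-> E *m Pi = 0.
Proof.
move=> psdD psdE; rewrite mulmx_supp_proj_eq0; split=> [/mxtrace_psdM_eq0 -> //|].
by move/(psd_mulmxC psdD psdE) ->; rewrite mxtrace0.
Qed.

Lemma psd_supp_proj_eq0 F : is_psd F -> F *m Pi = 0 -> Pp *m F *m Pp = F.
Proof.
move=> psdF FPi0.
have FPp : F *m Pp = F.
  by rewrite -{2}[F]mulmx1 -supp_proj_add_ker_proj mulmxDr FPi0 add0r.
have PpF : Pp *m F = F.
  by rewrite -ker_proj_herm -{1}(psd_herm psdF) -trmxC_mul FPp psd_herm.
by rewrite PpF FPp.
Qed.

Lemma ker_proj_compression_psdP E : is_herm E ->
  (forall F, is_psd F -> F *m Pi = 0 -> 0 <= \tr (E *m F)) <->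
  is_psd (Pp *m E *m Pp).
Proof.
move=> /is_hermE E_herm; split=> [trEF_ge0 | psdPEP F psdF FPi0].
  apply/is_psdE; split.
    by rewrite !trmxC_mul ker_proj_herm E_herm mulmxA.
  move=> v; rewrite -{2}ker_proj_herm -qform_mulmx.
  rewrite -mxtrace_mul_rank1; apply: trEF_ge0; first exact: psd_gram.
  by rewrite -!mulmxA ker_supp_proj_eq0 !mulmx0.
rewrite -(psd_supp_proj_eq0 psdF FPi0) mulmxA mxtrace_mulC !mulmxA.
exact: mxtrace_psdM_ge0.
Qed.

End SupportKernelProjections.

Section Ensemble.
Context {C : numClosedFieldType} {d n : nat}.
Variables (eta : 'I_n -> C) (rho : 'I_n -> 'M[C]_d) (x : 'I_n) (c : C).

Lemma measurement_binary (F : 'M[C]_d) : is_psd F -> is_psd (1%:M - F) ->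
  measurement (1%:M - F) (fun i => if i == x then F else 0).
Proof.
move=> psdF psd1F; split=> //; split=> [i|].
  by case: (i == x); last exact: psd0.
by rewrite (bigD1 x) //= eqxx big1 ?addr0 ?subrK // => i /negPf ->.
Qed.

Hypothesis ens : ensemble eta rho.

Lemma ensemble_eta_ge0 i : 0 <= eta i.
Proof. by case: ens => eta_gt0 _; apply/ltW. Qed.

Lemma ensemble_psd i : is_psd (rho i).
Proof. by case: ens => _ [_ /(_ i) []]. Qed.

Lemma qform_rho0 v : qform v (rho0 eta rho) = \sum_i eta i * qform v (rho i).
Proof. by rewrite qform_sum; apply: eq_bigr => i _; rewrite qformZ. Qed.

Lemma rho0_herm : (rho0 eta rho)^t* = rho0 eta rho.
Proof.
rewrite trmxC_sum; apply: eq_bigr => i _.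
by rewrite trmxCZ geC0_conj ?ensemble_eta_ge0 // (psd_herm (ensemble_psd i)).
Qed.

Lemma eta_qform_ge0 i v : 0 <= eta i * qform v (rho i).
Proof. exact: mulr_ge0 (ensemble_eta_ge0 i) (psd_qform_ge0 v (ensemble_psd i)). Qed.

Lemma eta_qform_le_rho0 v : eta x * qform v (rho x) <= qform v (rho0 eta rho).
Proof.
by rewrite qform_rho0 (bigD1 x) //= lerDl sumr_ge0 // => i _; apply: eta_qform_ge0.
Qed.

Hypothesis Cx : is_Cx eta rho x c.

Lemma Cx_ge0 : 0 <= c.
Proof.
case: Cx => -[Mq [M [[_ [psdM _]] [trM_gt0 <-]]]] _.
rewrite /ratio_x divr_ge0 ?mulr_ge0 ?ensemble_eta_ge0 ?(ltW trM_gt0) //.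
exact: mxtrace_psdM_ge0 (ensemble_psd x) (psdM x).
Qed.

Lemma Dx_herm : (Dx eta rho x c)^t* = Dx eta rho x c.
Proof.
rewrite trmxCB !trmxCZ rho0_herm (psd_herm (ensemble_psd x)).
by rewrite !geC0_conj ?Cx_ge0 ?ensemble_eta_ge0.
Qed.

Lemma Cx_qform_bound v : 0 < qform v (rho0 eta rho) ->
  eta x * qform v (rho x) <= c * qform v (rho0 eta rho).
Proof.
move=> qR0_gt0; have v_neq0 : v != 0.
  by apply: contraTneq qR0_gt0 => ->; rewrite /qform !mul0mx mxE ltxx.
have nv_gt0 : 0 < dotmx v v by rewrite dnorm_gt0.
pose F := (dotmx v v)^-1 *: (v^t* *m v).
have psdF : is_psd F by apply: psdZ (psd_gram v); rewrite invr_ge0 ltW.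
have trF k : \tr (rho k *m F) = (dotmx v v)^-1 * qform v (rho k).
  by rewrite -scalemxAr mxtraceZ mxtrace_mul_rank1.
have trR0F : \tr (rho0 eta rho *m F) = (dotmx v v)^-1 * qform v (rho0 eta rho).
  by rewrite -scalemxAr mxtraceZ mxtrace_mul_rank1.
have := Cx.2 _ _ (measurement_binary psdF (psd_1_sub_rank1 v_neq0)).
rewrite /ratio_x eqxx trF trR0F mulr_gt0 ?invr_gt0 // => /(_ isT).
set k := (dotmx v v)^-1; set q := qform v (rho0 eta rho).
have -> : eta x * (k * qform v (rho x)) / (k * q) = eta x * qform v (rho x) / q.
  by field; rewrite !gt_eqF ?invr_gt0.
by rewrite ler_pdivrMr.
Qed.

Lemma Dx_psd : is_psd (Dx eta rho x c).
Proof.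
apply/is_psdE; split; first exact: Dx_herm.
move=> v; rewrite qformB !qformZ subr_ge0.
have [qR0_0 | qR0_neq0] := eqVneq (qform v (rho0 eta rho)) 0.
  by rewrite qR0_0 mulr0 -qR0_0 eta_qform_le_rho0.
apply: Cx_qform_bound.
by rewrite lt_def qR0_neq0 (le_trans (eta_qform_ge0 x v) (eta_qform_le_rho0 v)).
Qed.

End Ensemble.

Theorem lemma2 (C : numClosedFieldType) (d n : nat)
  (eta : 'I_n -> C) (rho : 'I_n -> 'M[C]_d) (x : 'I_n) (c : C)
  (Pi Piperp : 'M[C]_d) :
  ensemble eta rho ->
  is_Cx eta rho x c ->
  supp_proj (Dx eta rho x c) Pi ->
  ker_proj (Dx eta rho x c) Piperp ->
  (forall E : 'M[C]_d, Mset eta rho x c E <-> (is_psd E /\ E *m Pi = 0)) /\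
  (forall E : 'M[C]_d,
     Mstar eta rho x c E <-> (is_herm E /\ is_psd (Piperp *m E *m Piperp))).
Proof.
move=> ens Cx Pi_supp Pp_ker.
have psdD := Dx_psd ens Cx; have D_herm := psd_herm psdD.
have Mset_supp E : Mset eta rho x c E <-> (is_psd E /\ E *m Pi = 0).
  by split=> -[psdE]; move/(psd_mxtrace_eq0_supp_proj D_herm Pi_supp psdD psdE).
split=> // E; split=> -[E_herm].
  move=> Mstar_E; split=> //.
  apply/(ker_proj_compression_psdP D_herm Pi_supp Pp_ker E_herm) => F psdF FPi0.
  by apply/Mstar_E/Mset_supp.
move/(ker_proj_compression_psdP D_herm Pi_supp Pp_ker E_herm) => trEF_ge0.
by split=> // F /Mset_supp[]; apply: trEF_ge0.
Qed.
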